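(* Let $n\ge 3$, let $u\in\mathbb{Z}_n^\times$, and let $k$ be an integer with $k\not\equiv 0,1\pmod n$. Consider the set $\mathcal{B}=\binom{\mathbb{Z}_n}{3}-f_{u,ku}$. (1) If $n$ is odd, $\mathcal{B}$ is the set of bases of a matroid on $\mathbb{Z}_n$ if and only if $k\not\equiv -1,\,2,\,\tfrac{n+1}{2}\pmod n$. (2) If $n$ is even, $\mathcal{B}$ is the set of bases of a matroid on $\mathbb{Z}_n$ if and only if $k\not\equiv -1,\,2,\,\tfrac{n}{2},\,\tfrac{n}{2}+1\pmod n$. (Such a matroid is invariant under translation, i.e. corresponds to a three-dimensional tropical subrepresentation of $\mathbb{B}[\mathbb{Z}_n]$.)
   Context: $\mathbb{Z}_n$ acts on $\binom{\mathbb{Z}_n}{3}$ (3-element subsets of $\mathbb{Z}_n$) by $x\cdot\{a,b,c\}=\{x+a,x+b,x+c\}$. For $i,j\in\mathbb{Z}_n$ with $0,i,j$ pairwise distinct, $f_{i,j}=\{\{a,a+i,a+j\}\mid a\in\mathbb{Z}_n\}$, an orbit of this action. $\mathbb{Z}_n^\times$ denotes the units of $\mathbb{Z}_n$. *)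

From HB Require Import structures.
From mathcomp Require Import all_boot all_order all_algebra.
Set Implicit Arguments. Unset Strict Implicit. Unset Printing Implicit Defensive.
Import GRing.Theory.
Local Open Scope ring_scope.

(* Z_n is 'Z_n (used only with 2 < n, so 'Z_n is exactly Z/nZ). *)

Definition orbit3 (n : nat) (i j : 'Z_n) : {set {set 'Z_n}} :=
  [set [set a; a + i; a + j] | a : 'Z_n].

Definition three_subsets (n : nat) : {set {set 'Z_n}} :=
  [set S : {set 'Z_n} | #|S| == 3%N].

Definition is_matroid_bases (T : finType) (BB : {set {set T}}) : Prop :=
  BB != set0 /\
  forall A B, A \in BB -> B \in BB ->
    forall a, a \in A :\: B ->
      exists2 b, b \in B :\: A & (b |: (A :\ a)) \in BB.

From HB Require Import structures.
From mathcomp Require Import all_boot all_order all_algebra zify ring.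
Import GRing.Theory.

(* The orbit f_{u,ku} consists of the blocks a + {0, 1, k} u.  When the six
   differences of {0, 1, k} are distinct, i.e. {0, 1, k} is a Sidon set, two
   distinct blocks meet in at most one point, and removing such a family from
   the 3-subsets leaves the bases of a sparse paving matroid.  Otherwise two
   blocks {x, p, q} and {y, p, q} share a pair, and exchanging a basis {a, p, q}
   towards a basis {p, x, y} is forced into one of them.  The coincidences are
   k = -1, k = 2 and 2k = 0, 1, 2; the symmetries (u, k) -> (-u, 1 - k) and,
   when 2k = 1, (u, k) -> (ku, 2) leave only k = 2 and k = n/2 (n even), where
   explicit points work, except for n <= 4 where every 3-subset is a block. *)

Set Implicit Arguments.
Unset Strict Implicit.
Unset Printing Implicit Defensive.
Local Open Scope ring_scope.

Lemma set3P (T : finType) (x a b c : T) :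
  x \in [set a; b; c] -> [\/ x = a, x = b | x = c].
Proof. by rewrite !inE => /orP[/orP[]|] /eqP ->; [apply: Or31 | apply: Or32 | apply: Or33]. Qed.

Lemma cards3 (T : finType) (x y z : T) :
  x != y -> x != z -> y != z -> #|[set x; y; z]| = 3%N.
Proof.
by move=> xy xz yz; rewrite -setUA cardsU1 cards2 yz !inE negb_or xy xz.
Qed.

Section SparsePaving.

Variables (T : finType) (r : nat) (F : {set {set T}}).

Lemma sparse_paving_bases :
  (exists2 S : {set T}, #|S| = r & S \notin F) ->
  (forall X Y, X \in F -> Y \in F -> (r.-1 <= #|X :&: Y|)%N -> X = Y) ->
  is_matroid_bases ([set S : {set T} | #|S| == r] :\: F).
Proof.
move=> [S0 cS0 nFS0] sparseF; split.
  by apply/set0Pn; exists S0; rewrite !inE nFS0 cS0 eqxx.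
move=> A B; rewrite !inE => /andP[nFA /eqP cA] /andP[nFB /eqP cB] a /setDP[aA aNB].
set C := A :\ a.
have r_gt0 : (0 < r)%N by rewrite -cA (cardsD1 a) aA.
have cC : #|C| = r.-1 by rewrite -cA (cardsD1 a A) aA add1n.
have cUC y : y \notin A -> #|y |: C| = r.
  move=> yA; rewrite cardsU1 cC (contra (subsetP (subD1set A a) y)) //; lia.
case: (boolP [exists y in B :\: A, y |: C \notin F]) =>
    [/exists_inP[y /setDP[yB yA] nFy] | /exists_inPn allF].
  by exists y; rewrite ?inE ?yB ?yA // nFy cUC // eqxx.
have inF y : y \in B :\: A -> y |: C \in F by move/allF; rewrite negbK.
have [b /setDP[bB bA]] : exists b, b \in B :\: A.
  apply/set0Pn/negP; rewrite setD_eq0 => sBA.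
  have sBC : B \subset C.
    apply/subsetP=> y yB; rewrite !inE (subsetP sBA) // andbT.
    by apply: contraNneq aNB => <-.
  by move: (subset_leq_card sBC); rewrite cB cC; lia.
have eqUC y : y \in B :\: A -> y |: C = b |: C.
  move=> yBA; apply: sparseF; [exact: inF | by apply: inF; rewrite inE bB bA |].
  rewrite -cC; apply: subset_leq_card.
  by apply/subsetP=> z zC; rewrite in_setI !in_setU1 zC !orbT.
have sBbC : B \subset b |: C.
  apply/subsetP=> w wB; have [wA | wA] := boolP (w \in A).
    by rewrite !inE wA andbT; apply/orP; right; apply: contraNneq aNB => <-.
  by rewrite -(eqUC w) ?setU11 // inE wA wB.
have eqB : B = b |: C by apply/eqP; rewrite eqEcard sBbC cUC ?cB ?leqnn.
by move: nFB; rewrite eqB inF // inE bA bB.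
Qed.
End SparsePaving.

Lemma not_bases_of_shared_pair (T : finType) (F : {set {set T}}) (a p q x y : T) :
  [&& a != p, a != q, a != x & a != y] -> [&& p != q, p != x, p != y & x != y] ->
  [set a; p; q] \notin F -> [set p; x; y] \notin F ->
  [set x; p; q] \in F -> [set y; p; q] \in F ->
  ~ is_matroid_bases ([set S : {set T} | #|S| == 3] :\: F).
Proof.
move=> /and4P[ap aq ax ay] /and4P[pq px py xy] nFA nFB Fx Fy [_ exch].
have Apq : [set a; p; q] :\ a = [set p; q].
  apply/setP=> w; rewrite !inE; case: eqP => [->|] //=.
  by rewrite (negbTE ap) (negbTE aq).
have [|||b] := exch [set a; p; q] [set p; x; y] _ _ a.
- by rewrite !inE nFA cards3.
- by rewrite !inE nFB cards3.
- by rewrite !inE !eqxx (negbTE ax) (negbTE ay) (negbTE ap).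
rewrite Apq setUA => /setDP[/set3P[]-> bNA]; rewrite inE ?Fx ?Fy ?andbF //.
by rewrite !inE eqxx orbT in bNA.
Qed.

Lemma not_bases_of_full (T : finType) (r : nat) (F : {set {set T}}) :
  (forall S : {set T}, #|S| = r -> S \in F) ->
  ~ is_matroid_bases ([set S : {set T} | #|S| == r] :\: F).
Proof.
by move=> fullF [/set0Pn[S]]; rewrite !inE => /andP[/negP nFS /eqP /fullF].
Qed.

Lemma modn_split (c d : nat) :
  (c %% d = if c < d then c else if c < d + d then c - d else c %% d)%N.
Proof.
case: ifP => [c_lt | c_ge]; first by rewrite modn_small.
case: ifP => // c_lt; have -> : c = (c - d + d)%N by lia.
by rewrite modnDr modn_small; lia.
Qed.

(* Rewrites every [c %% d] of the goal to [c] or [c - d]; [lia] must rule out [d + d <= c]. *)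
Ltac reduce_mods :=
  repeat match goal with |- context [(?c %% ?d)%N] =>
    first [ rewrite [(c %% d)%N]modn_small; last lia
          | rewrite [(c %% d)%N]modn_split ifF ?ifT; [| lia | lia]
          | rewrite [(c %% d)%N]modn_split; case: ifP => ?; [| case: ifP => ?; [| exfalso; lia]] ]
  end.

Definition sidon {V : finZmodType} (D : {set V}) :=
  {in D &, forall s s', {in D &, forall t t', s != s' -> s - s' = t - t' -> s = t}}.

Section Zn.

Variable n : nat.
Hypothesis n_gt2 : (2 < n)%N.
Local Notation Z := 'Z_n.

Lemma Zp_nat_eq (a b : nat) : ((a%:R : Z) == b%:R) = (a == b %[mod n]).
Proof. by rewrite -val_eqE /= !val_Zp_nat // ltnW. Qed.

Lemma Zp_natP (x : Z) : exists2 h, (h < n)%N & x = h%:R.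
Proof. by exists (val x); rewrite ?natr_Zp // -[n in (_ < n)%N]Zp_cast ?ltn_ord // ltnW. Qed.

Lemma Zp_one_neq0 : (1 : Z) != 0.
Proof. by rewrite -[1]/(1%:R : Z) -[0]/(0%:R : Z) Zp_nat_eq !modn_small //; lia. Qed.

Lemma Zp_two_neq0 : (2 : Z) != 0.
Proof. by rewrite -[0]/(0%:R : Z) Zp_nat_eq !modn_small //; lia. Qed.

Lemma Zp_two_neq1 : (2 : Z) != 1.
Proof. by rewrite -[1]/(1%:R : Z) Zp_nat_eq !modn_small //; lia. Qed.

Ltac contra_nonzero H :=
  match type of H with ?L = 0 =>
    match goal with c : is_true (?M != 0) |- _ =>
      apply: (negP c); apply/eqP;
      first [ transitivity L; [ring | exact: H]
            | transitivity (- L); [ring | by rewrite H oppr0] ] end end.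

Lemma sidon_01K (K : Z) :
  K != 0 -> K != 1 -> K != -1 -> K != 2 -> K + K != 0 -> K + K != 1 -> K + K != 2 ->
  sidon [set 0; 1; K].
Proof.
move=> K0 K1 Km1 K2 KK0 KK1 KK2.
have K1' : K - 1 != 0 by rewrite subr_eq0.
have Km1' : K + 1 != 0 by rewrite addr_eq0.
have K2' : K - 2 != 0 by rewrite subr_eq0.
have KK1' : K + K - 1 != 0 by rewrite subr_eq0.
have KK2' : K + K - 2 != 0 by rewrite subr_eq0.
have two0 := Zp_two_neq0; have one0 := Zp_one_neq0.
move=> s s' /set3P[]-> /set3P[]-> t t' /set3P[]-> /set3P[]->;
  rewrite ?eqxx // => _ /eqP; rewrite -subr_eq0 => /eqP diff_eq; exfalso;
  contra_nonzero diff_eq.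
Qed.

Section Orbit.

Variable u : Z.
Hypothesis u_unit : u \is a GRing.unit.

Lemma mem_block (K a p : Z) :
  p \in [set a; a + u; a + K * u] -> exists2 s, s \in [set 0; 1; K] & p = a + s * u.
Proof.
by case/set3P=> ->; [exists 0 | exists 1 | exists K]; rewrite ?inE ?eqxx ?orbT //; ring.
Qed.

Lemma block_inj (K a b p q : Z) : sidon [set 0; 1; K] -> p != q ->
  p \in [set a; a + u; a + K * u] -> q \in [set a; a + u; a + K * u] ->
  p \in [set b; b + u; b + K * u] -> q \in [set b; b + u; b + K * u] -> a = b.
Proof.
move=> sD pq /mem_block[s Ds pEa] /mem_block[s' Ds' qEa].
move=> /mem_block[t Dt pEb] /mem_block[t' Dt' qEb].
have ss' : s != s' by apply: contraNneq pq => ss'; rewrite pEa qEa ss'.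
have tt' : t != t' by apply: contraNneq pq => tt'; rewrite pEb qEb tt'.
have eq_diff : (s - s') * u = (t - t') * u.
  transitivity (p - q); first by rewrite pEa qEa; ring.
  by rewrite pEb qEb; ring.
have st : s = t := sD s s' Ds Ds' t t' Dt Dt' ss' (mulIr u_unit eq_diff).
by apply: (addIr (s * u)); rewrite -pEa st -pEb.
Qed.

Lemma orbit3_sparse (K : Z) : sidon [set 0; 1; K] ->
  forall X Y, X \in orbit3 u (K * u) -> Y \in orbit3 u (K * u) ->
  (2 <= #|X :&: Y|)%N -> X = Y.
Proof.
move=> sD _ _ /imsetP[a _ ->] /imsetP[b _ ->].
case/card_gt1P=> p [q [/setIP[pa pb] /setIP[qa qb] pq]].
by rewrite (block_inj sD pq pa qa pb qb).
Qed.

Lemma card_block (K a : Z) : K != 0 -> K != 1 -> #|[set a; a + u; a + K * u]| = 3%N.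
Proof.
move=> K0 K1; have eq_au s t : (a + s * u == a + t * u) = (s == t).
  by rewrite (inj_eq (addrI a)) (inj_eq (mulIr u_unit)).
have -> : [set a; a + u; a + K * u] = [set a + 0 * u; a + 1 * u; a + K * u].
  by rewrite mul0r addr0 mul1r.
by rewrite cards3 ?eq_au // 1?eq_sym ?Zp_one_neq0.
Qed.

Lemma orbit3_sidon_bases (K : Z) : sidon [set 0; 1; K] ->
  is_matroid_bases (three_subsets n :\: orbit3 u (K * u)).
Proof.
move=> sD; apply: sparse_paving_bases; last exact: orbit3_sparse.
set W := [set 0; 0 + u; 0 + 2 * u]; set B0 := [set 0; 0 + u; 0 + K * u].
exists W; first exact: card_block Zp_two_neq0 Zp_two_neq1.
apply/negP => W_orb.
have u0 : (0 : Z) != 0 + u.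
  by rewrite add0r eq_sym; apply: contraTneq u_unit => ->; rewrite unitr0.
have W_B0 : (1 < #|W :&: B0|)%N.
  by apply/card_gt1P; exists 0, (0 + u); rewrite !inE !eqxx ?orbT.
have /mem_block[s Ds /addrI /(mulIr u_unit) s2] : 0 + 2 * u \in B0.
  by rewrite -(orbit3_sparse sD W_orb _ W_B0) ?inE ?eqxx ?orbT //; apply: imset_f.
have D0 : 0 \in [set 0; 1; K] by rewrite !inE eqxx.
have D1 : 1 \in [set 0; 1; K] by rewrite !inE eqxx orbT.
rewrite -s2 in Ds; have diff_eq : (1 : Z) - 0 = 2 - 1 by ring.
by have := Zp_two_neq1; rewrite -(sD 1 0 D1 D0 2 1 Ds D1 Zp_one_neq0 diff_eq) eqxx.
Qed.

Definition point (c : nat) : Z := c%:R * u.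

Lemma point_eq (c d : nat) : (point c == point d) = (c == d %[mod n]).
Proof. by rewrite /point (inj_eq (mulIr u_unit)) Zp_nat_eq. Qed.

Lemma point_addu (c : nat) : point c + u = point c.+1.
Proof. by rewrite /point -[c.+1]addn1 natrD mulrDl mul1r. Qed.

Lemma point_add (c k : nat) : point c + k%:R * u = point (c + k).
Proof. by rewrite /point natrD mulrDl. Qed.

Definition in3_mod (t x y z : nat) :=
  [|| t == x %[mod n], t == y %[mod n] | t == z %[mod n]].

Lemma mem_point3 (t x y z : nat) :
  (point t \in [set point x; point y; point z]) = in3_mod t x y z.
Proof. by rewrite !inE !point_eq -orbA. Qed.

Definition same3_mod (x y z x' y' z' : nat) :=
  [&& in3_mod x x' y' z', in3_mod y x' y' z', in3_mod z x' y' z',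
      in3_mod x' x y z, in3_mod y' x y z & in3_mod z' x y z].

Lemma eq_point3 (x y z x' y' z' : nat) : same3_mod x y z x' y' z' ->
  [set point x; point y; point z] = [set point x'; point y'; point z'].
Proof.
case/andP=> x_in /and5P[y_in z_in x'_in y'_in z'_in].
by apply/eqP; rewrite eqEsubset; apply/andP; split; apply/subsetP=> w /set3P[]->;
  rewrite mem_point3.
Qed.

Definition block_root (k x y z : nat) :=
  [|| in3_mod x.+1 x y z && in3_mod (x + k) x y z,
      in3_mod y.+1 x y z && in3_mod (y + k) x y z
    | in3_mod z.+1 x y z && in3_mod (z + k) x y z].

Lemma point3_notin_orbit (k x y z : nat) : ~~ block_root k x y z ->
  [set point x; point y; point z] \notin orbit3 u (k%:R * u).
Proof.
apply: contra => /imsetP[a _ blk_a].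
have a1 : a + u \in [set point x; point y; point z] by rewrite blk_a !inE eqxx orbT.
have ak : a + k%:R * u \in [set point x; point y; point z] by rewrite blk_a !inE eqxx !orbT.
have : a \in [set point x; point y; point z] by rewrite blk_a !inE eqxx.
case/set3P=> a_eq; move: a1 ak;
  by rewrite a_eq point_addu point_add !mem_point3 /block_root => -> ->; rewrite ?orbT.
Qed.

Lemma point3_in_orbit (k c x y z : nat) : same3_mod x y z c c.+1 (c + k) ->
  [set point x; point y; point z] \in orbit3 u (k%:R * u).
Proof. by move/eq_point3 ->; rewrite -point_addu -point_add; apply: imset_f. Qed.

Ltac mod_arith := rewrite /same3_mod /block_root /in3_mod; reduce_mods; lia.

(* In multiples of u, the blocks {0, 1, 2} and {3, 1, 2} share the pair {1, 2}. *)
Lemma not_bases_two_large : (4 < n)%N ->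
  ~ is_matroid_bases (three_subsets n :\: orbit3 u (2 * u)).
Proof.
move=> n_gt4.
apply: (@not_bases_of_shared_pair _ _ (point 4) (point 1) (point 2) (point 0) (point 3)).
- by rewrite !point_eq; mod_arith.
- by rewrite !point_eq; mod_arith.
- by apply: point3_notin_orbit; mod_arith.
- by apply: point3_notin_orbit; mod_arith.
- by apply: (@point3_in_orbit 2 0); mod_arith.
- by apply: (@point3_in_orbit 2 1); mod_arith.
Qed.

(* In multiples of u, the blocks {0, 1, h} and {h, h + 1, 2h = 0} share the pair {0, h}. *)
Lemma not_bases_half_period (h : nat) : n = (h + h)%N -> (3 <= h)%N ->
  ~ is_matroid_bases (three_subsets n :\: orbit3 u (h%:R * u)).
Proof.
move=> n_hh h_ge3.
apply: (@not_bases_of_shared_pair _ _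
  (point (h + h - 1)) (point 0) (point h) (point 1) (point h.+1)).
- by rewrite !point_eq; mod_arith.
- by rewrite !point_eq; mod_arith.
- by apply: point3_notin_orbit; mod_arith.
- by apply: point3_notin_orbit; mod_arith.
- by apply: (@point3_in_orbit h 0); mod_arith.
- by apply: (@point3_in_orbit h h); mod_arith.
Qed.

Lemma orbit3_two_full : (n <= 4)%N ->
  forall S : {set Z}, #|S| = 3%N -> S \in orbit3 u (2 * u).
Proof.
move=> n_le4 S cS.
suff [a sub_aS] : exists a, [set a; a + u; a + 2 * u] \subset S.
  have <- : [set a; a + u; a + 2 * u] = S.
    by apply/eqP; rewrite eqEcard sub_aS cS card_block ?Zp_two_neq0 ?Zp_two_neq1.
  exact: imset_f.
have [c cNS | allS] := pickP [pred c | c \notin S]; last first.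
  by exists 0; apply/subsetP=> w _; move/negbFE: (allS w).
have cardZ : #|Z| = n by rewrite card_ord Zp_cast // ltnW.
have S_eq : S = [set~ c].
  apply/eqP; rewrite eqEcard cardsC1 cardZ cS.
  apply/andP; split; last by lia.
  by apply/subsetP=> w wS; rewrite !inE; apply: contraNneq cNS => <-.
have n4 : n = 4%N by move: cS; rewrite S_eq cardsC1 cardZ; lia.
have p0 : point 0 = 0 by rewrite /point mul0r.
exists (c + u); rewrite S_eq.
have -> : [set c + u; c + u + u; c + u + 2 * u] = [set c + point 1; c + point 2; c + point 3].
  by rewrite /point; congr [set _; _; _]; ring.
apply/subsetP=> w /set3P[]->;
  by rewrite !inE -{2}[c]addr0 (inj_eq (addrI c)) -p0 point_eq n4.
Qed.

Lemma not_bases_two : ~ is_matroid_bases (three_subsets n :\: orbit3 u (2 * u)).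
Proof.
have [n_le4 | n_gt4] := leqP n 4; last exact: not_bases_two_large.
exact: not_bases_of_full (orbit3_two_full n_le4).
Qed.

Lemma not_bases_double_zero (K : Z) : K != 0 -> K != 2 -> K + K = 0 ->
  ~ is_matroid_bases (three_subsets n :\: orbit3 u (K * u)).
Proof.
have [h h_lt ->] := Zp_natP K; rewrite -natrD -[0]/(0%:R : Z) => K0 K2 /eqP.
have h0 : h != 0%N by apply: contraNneq K0 => ->.
have h2 : h != 2%N by apply: contraNneq K2 => ->.
by rewrite Zp_nat_eq => hh0; apply: not_bases_half_period; move: hh0; reduce_mods; lia.
Qed.

End Orbit.

Lemma orbit3_reflect (u K : Z) : orbit3 u (K * u) = orbit3 (- u) ((1 - K) * - u).
Proof.
have blkE a : [set a; a + u; a + K * u] = [set a + u; a + u + - u; a + u + (1 - K) * - u].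
  have -> : a + u + - u = a by ring.
  have -> : a + u + (1 - K) * - u = a + K * u by ring.
  by apply/setP=> w; rewrite !inE [(w == a + u) || _]orbC.
apply/setP=> X; apply/imsetP/imsetP => [[a _ ->] | [a _ ->]].
  by exists (a + u); rewrite ?blkE.
by exists (a - u); rewrite ?blkE ?subrK.
Qed.

Lemma orbit3_half (u K : Z) : K + K = 1 -> orbit3 u (K * u) = orbit3 (K * u) (2 * (K * u)).
Proof.
move=> KK1; have -> : 2 * (K * u) = u.
  by transitivity ((K + K) * u); [ring | rewrite KK1 mul1r].
by apply: eq_imset => a; apply/setP=> w; rewrite !inE -!orbA [(w == a + u) || _]orbC.
Qed.

Lemma Zp_double_eq0 (K : Z) : K != 0 -> (K + K == 0) = ~~ odd n && (K == (n./2)%:R).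
Proof.
have [h h_lt ->] := Zp_natP K; rewrite -natrD -[0]/(0%:R : Z) !Zp_nat_eq.
by reduce_mods; lia.
Qed.

Lemma Zp_double_eq1 (K : Z) : (K + K == 1) = odd n && (K == ((n + 1)./2)%:R).
Proof.
have [h h_lt ->] := Zp_natP K; rewrite -natrD -[1]/(1%:R : Z) !Zp_nat_eq.
by reduce_mods; lia.
Qed.

Lemma Zp_double_eq2 (K : Z) : K != 1 -> (K + K == 2) = ~~ odd n && (K == (n./2 + 1)%:R).
Proof.
have [h h_lt ->] := Zp_natP K; rewrite -natrD -[1]/(1%:R : Z) !Zp_nat_eq.
by reduce_mods; lia.
Qed.

Lemma orbit3_bases_iff (u K : Z) : u \is a GRing.unit -> K != 0 -> K != 1 ->
  is_matroid_bases (three_subsets n :\: orbit3 u (K * u)) <->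
  [/\ K != -1, K != 2, K + K != 0, K + K != 1 & K + K != 2].
Proof.
move=> u_unit K0 K1; split=> [bases_K | [Km1 K2 KK0 KK1 KK2]]; last first.
  exact/orbit3_sidon_bases/sidon_01K.
have mu_unit : - u \is a GRing.unit by rewrite unitrN.
have K2 : K != 2 by apply: contraPneq bases_K => ->; apply: not_bases_two.
have Km1 : K != -1.
  have one_sub_m1 : 1 - -1 = 2 :> Z by ring.
  apply: contraPneq bases_K => ->.
  by rewrite orbit3_reflect one_sub_m1; apply: not_bases_two.
split=> //; apply/eqP => KK.
- exact: not_bases_double_zero bases_K.
- have Ku_unit : K * u \is a GRing.unit.
    rewrite unitrM u_unit andbT; apply/unitrPr; exists 2.
    by transitivity (K + K); [ring | exact: KK].
  by move: bases_K; rewrite orbit3_half //; apply: not_bases_two.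
- move: bases_K; rewrite orbit3_reflect; apply: not_bases_double_zero => //.
  + by rewrite subr_eq0 eq_sym.
  + apply: contra Km1 => /eqP KE; apply/eqP.
    by transitivity (1 - (1 - K)); [ring | rewrite KE; ring].
  + by transitivity (2 - (K + K)); [ring | rewrite KK subrr].
Qed.

End Zn.

Theorem mainTheorem15 (n : nat) (hn : (2 < n)%N) (u : 'Z_n) (k : int)
  (hu : u \is a GRing.unit)
  (hk0 : (k%:~R : 'Z_n) != 0) (hk1 : (k%:~R : 'Z_n) != 1) :
  let kn : 'Z_n := k%:~R in
  let BB := three_subsets n :\: orbit3 u (kn * u) in
  (odd n ->
    (is_matroid_bases BB <->
      [/\ kn != -1, kn != 2 & kn != ((n + 1)./2)%:R])) /\
  (~~ odd n ->
    (is_matroid_bases BB <->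
      [/\ kn != -1, kn != 2, kn != (n./2)%:R & kn != (n./2 + 1)%:R])).
Proof.
move=> kn BB; rewrite /BB orbit3_bases_iff // Zp_double_eq0 // Zp_double_eq2 // Zp_double_eq1 //.
by split=> n_par; rewrite ?n_par ?(negbTE n_par) /=; split=> [[] | []].
Qed.
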